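(* Let $M\ge2$, let $\bm{\mu}_1,\dots,\bm{\mu}_M\in\mathbb{R}^d$, and let $\epsilon>0$. Let $C_k(\mathbf{x})$ denote either the GLRT cost $\|g_\epsilon(\mathbf{x}-\bm{\mu}_k)\|_2^2$ for all $k$, or the minimum-distance cost $\|\mathbf{x}-\bm{\mu}_k\|_2^2$ for all $k$. Fix a true class $i$ and a noise realization $\mathbf{n}\in\mathbb{R}^d$. For $j\ne i$, let $\mathbf{e}_{ij}=-\epsilon\,\mathrm{sign}(\bm{\mu}_i-\bm{\mu}_j)$. Then the following are equivalent: (1) there exist $\mathbf{e}$ with $\|\mathbf{e}\|_\infty\le\epsilon$ and $j\ne i$ such that $C_j(\bm{\mu}_i+\mathbf{e}+\mathbf{n})<C_i(\bm{\mu}_i+\mathbf{e}+\mathbf{n})$; (2) there exists $j\ne i$ such that $C_j(\bm{\mu}_i+\mathbf{e}_{ij}+\mathbf{n})<C_i(\bm{\mu}_i+\mathbf{e}_{ij}+\mathbf{n})$.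
   Context: For $\epsilon>0$, $g_\epsilon(x)=\mathrm{sign}(x)\max(0,|x|-\epsilon)$ with $\mathrm{sign}(0)=0$, applied coordinate-wise; $\mathrm{sign}$ of a vector is also taken coordinate-wise. *)

From HB Require Import structures.
From mathcomp Require Import all_boot all_order all_algebra.
Set Implicit Arguments. Unset Strict Implicit. Unset Printing Implicit Defensive.
Import Order.TTheory GRing.Theory Num.Theory.
Local Open Scope ring_scope.

Definition soft_thr (R : realFieldType) (eps x : R) : R :=
  Num.sg x * Num.max 0 (`|x| - eps).

Definition gvec (R : realFieldType) (d : nat) (eps : R) (v : 'rV[R]_d) : 'rV[R]_d :=
  \row_k soft_thr eps (v 0 k).

Definition sgvec (R : realFieldType) (d : nat) (v : 'rV[R]_d) : 'rV[R]_d :=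
  \row_k Num.sg (v 0 k).

Definition sqnorm2 (R : realFieldType) (d : nat) (v : 'rV[R]_d) : R :=
  \sum_(k < d) (v 0 k) ^+ 2.

Definition inf_norm_le (R : realFieldType) (d : nat) (v : 'rV[R]_d) (eps : R) : Prop :=
  forall k : 'I_d, `|v 0 k| <= eps.

Definition cost (R : realFieldType) (d : nat) (glrt : bool) (eps : R)
    (muk x : 'rV[R]_d) : R :=
  if glrt then sqnorm2 (gvec eps (x - muk)) else sqnorm2 (x - muk).

From HB Require Import structures.
From mathcomp Require Import all_boot all_order all_algebra.
From mathcomp Require Import ring lra.
Import Order.TTheory GRing.Theory Num.Theory.
Set Implicit Arguments. Unset Strict Implicit.
Local Open Scope ring_scope.

(* Both costs are sums over coordinates of a convex function [f] of the
   residual, and C_j(x) - C_i(x) has k-th term f(a + y) - f(y) with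
   a = mu_i k - mu_j k and y = e_k + n_k.  By convexity this increment is
   monotone in y (nondecreasing if a >= 0, nonincreasing if a <= 0), so over
   y in [n_k - eps, n_k + eps] it is smallest at y = n_k - eps sg(a), i.e. at
   the perturbation e_ij.  Hence e_ij minimizes C_j - C_i over the whole
   eps-ball, which gives (1) -> (2); (2) -> (1) is the choice e := e_ij. *)

Definition sqr_pos (R : realFieldType) (s : R) : R := Num.max 0 s ^+ 2.

Lemma sqr_posE (R : realFieldType) (s : R) :
  sqr_pos s = if 0 <= s then s ^+ 2 else 0.
Proof. by rewrite /sqr_pos; case: leP => // _; rewrite expr0n. Qed.

Lemma sqr_pos_increment_le (R : realFieldType) (a s1 s2 : R) :
  0 <= a -> s1 <= s2 ->
  sqr_pos (s1 + a) - sqr_pos s1 <= sqr_pos (s2 + a) - sqr_pos s2.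
Proof.
move=> ha hs; rewrite !sqr_posE.
by case: (leP 0 (s1 + a)); case: (leP 0 s1); case: (leP 0 (s2 + a));
  case: (leP 0 s2) => *; nra.
Qed.

Lemma soft_thr_sqr (R : realFieldType) (eps t : R) : 0 <= eps ->
  soft_thr eps t ^+ 2 = sqr_pos (t - eps) + sqr_pos (- t - eps).
Proof.
move=> he; rewrite /soft_thr !sqr_posE.
case: (ltrgtP t 0) => [ht|ht|->].
- rewrite ltr0_sg // ltr0_norm //.
  by case: (leP 0 (t - eps)); case: (leP 0 (- t - eps)) => *;
    first [lra | ring | nra].
- rewrite gtr0_sg // gtr0_norm //.
  by case: (leP 0 (t - eps)); case: (leP 0 (- t - eps)) => *;
    first [lra | ring | nra].
- by rewrite sgr0 mul0r expr0n /=; case: (leP 0 (0 - eps));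
    case: (leP 0 (- 0 - eps)) => *; first [lra | ring | nra].
Qed.

Definition coord_cost (R : realFieldType) (glrt : bool) (eps t : R) : R :=
  if glrt then soft_thr eps t ^+ 2 else t ^+ 2.

Lemma cost_sumE (R : realFieldType) (d : nat) (glrt : bool) (eps : R)
    (m x : 'rV[R]_d) :
  cost glrt eps m x = \sum_(k < d) coord_cost glrt eps (x 0 k - m 0 k).
Proof.
by rewrite /cost /coord_cost /sqnorm2; case: glrt; apply: eq_bigr => k _;
  rewrite !mxE.
Qed.

Lemma coord_cost_increment_le (R : realFieldType) (glrt : bool) (eps a y1 y2 : R) :
  0 <= eps -> 0 <= a -> y1 <= y2 ->
  coord_cost glrt eps (a + y1) - coord_cost glrt eps y1
    <= coord_cost glrt eps (a + y2) - coord_cost glrt eps y2.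
Proof.
move=> he ha hy; rewrite /coord_cost; case: glrt; last by nra.
rewrite !soft_thr_sqr //.
have right_tail := sqr_pos_increment_le ha (lerB hy (lexx eps)).
have left_tail : - (a + y2) - eps <= - (a + y1) - eps by lra.
have {}left_tail := sqr_pos_increment_le ha left_tail.
have -> : a + y1 - eps = y1 - eps + a by ring.
have -> : a + y2 - eps = y2 - eps + a by ring.
have -> : - y1 - eps = - (a + y1) - eps + a by ring.
have -> : - y2 - eps = - (a + y2) - eps + a by ring.
lra.
Qed.

Lemma coord_cost_worst_perturbation (R : realFieldType) (glrt : bool)
    (eps mi mj e nk : R) : 0 <= eps -> `|e| <= eps ->
  let x := mi - eps * Num.sg (mi - mj) + nk in
  coord_cost glrt eps (x - mj) - coord_cost glrt eps (x - mi)
    <= coord_cost glrt eps (mi + e + nk - mj) - coord_cost glrt eps (mi + e + nk - mi).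
Proof.
move=> he; rewrite ler_norml => /andP [he_lo he_hi] /=.
have shift_j z : mi + z + nk - mj = (mi - mj) + (z + nk) by ring.
have shift_i z : mi + z + nk - mi = z + nk by ring.
rewrite !shift_j !shift_i; set a := mi - mj.
case: (ltrgtP a 0) => ha.
- rewrite ltr0_sg // mulrN1 opprK.
  have := @coord_cost_increment_le R glrt eps (- a) (a + (e + nk)) (a + (eps + nk))
    he ltac:(lra) ltac:(lra).
  by rewrite !addKr; lra.
- rewrite gtr0_sg // mulr1.
  by apply: coord_cost_increment_le => //; lra.
- by rewrite ha !add0r !subrr.
Qed.

Lemma sign_perturbation_inf_norm_le (R : realFieldType) (d : nat) (eps : R)
    (v : 'rV[R]_d) :
  0 <= eps -> inf_norm_le (- (eps *: sgvec v)) eps.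
Proof.
move=> he k; rewrite !mxE normrN normrM (ger0_norm he) normr_sg.
by case: (_ != 0); rewrite /= ?mulr1 ?mulr0.
Qed.

Theorem mainTheorem9 (R : realFieldType) (M d : nat) (mu : 'I_M -> 'rV[R]_d)
    (eps : R) (glrt : bool) (i : 'I_M) (n : 'rV[R]_d) :
  (2 <= M)%N -> 0 < eps ->
  (exists (e : 'rV[R]_d) (j : 'I_M),
      inf_norm_le e eps /\ j != i /\
      cost glrt eps (mu j) (mu i + e + n) < cost glrt eps (mu i) (mu i + e + n))
  <->
  (exists j : 'I_M, j != i /\
      let eij := - (eps *: sgvec (mu i - mu j)) in
      cost glrt eps (mu j) (mu i + eij + n) < cost glrt eps (mu i) (mu i + eij + n)).
Proof.
move=> _ /ltW he; split.
- move=> [e [j [he_small [hji misclassified]]]]; exists j; split => //=.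
  rewrite !cost_sumE -subr_lt0 -sumrB in misclassified.
  rewrite !cost_sumE -subr_lt0 -sumrB.
  apply: le_lt_trans misclassified; apply: ler_sum => k _.
  rewrite !mxE; exact: coord_cost_worst_perturbation.
- move=> [j [hji misclassified]].
  exists (- (eps *: sgvec (mu i - mu j))), j.
  by split; [exact: sign_perturbation_inf_norm_le | split].
Qed.
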